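(* Let $\mathbb{G}$ be an $E$-group. (i) If $\mathbb{G}$ is $2$-acyclic, then for every $g\in\mathbb{G}$ the set $\alpha_g:=\bigcap\{\alpha'\subseteq E: g\in\mathbb{G}[\alpha']\}$ satisfies $g\in\mathbb{G}[\alpha_g]$, so it is the unique $\subseteq$-minimal $\alpha'\subseteq E$ with $g\in\mathbb{G}[\alpha']$. (ii) If $\mathbb{G}$ is $3$-acyclic, then for every $\alpha\subseteq E$ and $g\in\mathbb{G}$, the coset $B=g\mathbb{G}[\alpha]$ and the set $\alpha_B:=\bigcap\{\alpha_h: h\in B\}$ (with $\alpha_h$ as in (i)) satisfy $\mathbb{G}[\alpha_B]\cap B\neq\emptyset$; thus $\alpha_B$ is the unique $\subseteq$-minimal $\alpha'\subseteq E$ with $\mathbb{G}[\alpha']\cap B\neq\emptyset$.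
   Context: Let $E$ be a finite set. An $E$-group is a group $\mathbb{G}$ together with an inclusion $E\subseteq\mathbb{G}$ such that $E$ generates $\mathbb{G}$ and every $e\in E$ satisfies $e\neq1$, $e^2=1$. For $\alpha\subseteq E$, $\mathbb{G}[\alpha]$ is the subgroup generated by $\alpha$. A coset cycle of length $n\ge2$ in $\mathbb{G}$ is a cyclically indexed family $(g_i,\alpha_i)_{i\in\mathbb{Z}_n}$ with $g_i\in\mathbb{G}$, $\alpha_i\subseteq E$, such that for all $i$: $g_{i+1}\in g_i\mathbb{G}[\alpha_i]$ and $g_i\mathbb{G}[\alpha_i\cap\alpha_{i-1}]\cap g_{i+1}\mathbb{G}[\alpha_i\cap\alpha_{i+1}]=\emptyset$. $\mathbb{G}$ is $N$-acyclic ($N\ge2$) if it admits no coset cycle of length $n$ with $2\le n\le N$. *)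

(* the group itself is an arbitrary (possibly infinite) group given explicitly. *)
From HB Require Import structures.
From mathcomp Require Import all_boot.
From Stdlib Require Import ClassicalEpsilon.
Set Implicit Arguments. Unset Strict Implicit. Unset Printing Implicit Defensive.

Record group := Group {
  gcar :> Type;
  gmul : gcar -> gcar -> gcar;
  ginv : gcar -> gcar;
  gone : gcar;
  gmulA : forall x y z, gmul x (gmul y z) = gmul (gmul x y) z;
  gmul1l : forall x, gmul gone x = x;
  gmulVl : forall x, gmul (ginv x) x = gone
}.

Definition pbool (P : Prop) : bool :=
  if excluded_middle_informative P then true else false.

Section EGroup.
Variables (E : finType) (G : group) (emb : E -> G).

Inductive gen (alpha : {set E}) : G -> Prop :=
  | gen_gen e : e \in alpha -> gen alpha (emb e)
  | gen_one : gen alpha (gone G)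
  | gen_mul x y : gen alpha x -> gen alpha y -> gen alpha (gmul x y)
  | gen_inv x : gen alpha x -> gen alpha (ginv x).

Definition in_coset (g : G) (alpha : {set E}) (x : G) : Prop :=
  exists2 h, gen alpha h & x = gmul g h.

Definition is_Egroup : Prop :=
  [/\ injective emb,
      (forall x : G, gen [set: E] x),
      (forall e, emb e <> gone G) &
      (forall e, gmul (emb e) (emb e) = gone G)].

(* coset cycle (g_i, alpha_i)_{i in Z_n}, indices as 'I_n with cyclic
   successor ordS and predecessor ord_pred *)
Definition coset_cycle (n : nat) (g : 'I_n -> G) (a : 'I_n -> {set E}) : Prop :=
  2 <= n /\
  forall i : 'I_n,
    in_coset (g i) (a i) (g (ordS i)) /\
    ~ (exists x, in_coset (g i) (a i :&: a (ord_pred i)) x /\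
                 in_coset (g (ordS i)) (a i :&: a (ordS i)) x).

Definition acyclic (N : nat) : Prop :=
  forall n, 2 <= n -> n <= N ->
  forall (g : 'I_n -> G) (a : 'I_n -> {set E}), ~ coset_cycle g a.

Definition alpha_of (g : G) : {set E} :=
  \bigcap_(a : {set E} | pbool (gen a g)) a.

Definition alpha_coset (g : G) (alpha : {set E}) : {set E} :=
  [set e | pbool (forall h, in_coset g alpha h -> e \in alpha_of h)].

End EGroup.

(* 2-acyclicity makes the subgroups G[alpha] closed under intersection:
   if x lies in G[alpha] and G[beta] but not in G[alpha :&: beta], then
   (1, alpha), (x, beta) is a coset cycle of length 2.  Hence alpha_g, a
   finite intersection of sets generating g, still generates g.
   For a coset B = g G[alpha], pick alpha' minimal such that G[alpha'] meets
   B, say in h0.  For h in B, 3-acyclicity applied to (1, alpha'), (h0, alpha),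
   (h, alpha_h) shows that G[alpha' :&: alpha_h] meets B too, so alpha' is
   contained in every alpha_h, i.e. in alpha_B, and h0 witnesses the claim. *)
From Stdlib Require Import Classical ClassicalEpsilon.
From mathcomp Require Import all_boot.

Set Implicit Arguments. Unset Strict Implicit.

Lemma pboolP (P : Prop) : pbool P <-> P.
Proof. by rewrite /pbool; case: excluded_middle_informative. Qed.

Section GroupLaws.
Variable G : group.

Lemma gmulVr (x : G) : gmul x (ginv x) = gone G.
Proof.
set y := gmul x (ginv x).
have yy : gmul y y = y.
  by rewrite /y -gmulA [gmul (ginv x) _]gmulA gmulVl gmul1l.
by rewrite -[y]gmul1l -(gmulVl y) -gmulA yy.
Qed.

Lemma gmul1r (x : G) : gmul x (gone G) = x.
Proof. by rewrite -(gmulVl x) gmulA gmulVr gmul1l. Qed.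

Lemma gmulKV (x y : G) : gmul (gmul x y) (ginv y) = x.
Proof. by rewrite -gmulA gmulVr gmul1r. Qed.

End GroupLaws.

Section Cosets.
Variables (E : finType) (G : group) (emb : E -> G).
Implicit Types (A B : {set E}) (g h x y : G).

Lemma gen_sub A B x : A \subset B -> gen emb A x -> gen emb B x.
Proof.
move=> sAB; elim=> [e eA| |y z _ Hy _ Hz|y _ Hy].
- exact/gen_gen/(subsetP sAB).
- exact: gen_one.
- exact: gen_mul.
- exact: gen_inv.
Qed.

Lemma in_coset_refl g A : in_coset emb g A g.
Proof. by exists (gone G); [exact: gen_one | rewrite gmul1r]. Qed.

Lemma in_coset1P A x : in_coset emb (gone G) A x <-> gen emb A x.
Proof. by split=> [[u hu ->] | hx]; [rewrite gmul1l | exists x; rewrite ?gmul1l]. Qed.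

Lemma in_coset_sym g A x : in_coset emb g A x -> in_coset emb x A g.
Proof. by case=> u hu ->; exists (ginv u); [exact: gen_inv | rewrite gmulKV]. Qed.

Lemma in_coset_trans g A x y :
  in_coset emb g A x -> in_coset emb x A y -> in_coset emb g A y.
Proof.
case=> u hu -> [v hv ->]; exists (gmul u v); first exact: gen_mul.
by rewrite gmulA.
Qed.

Lemma in_coset_sub g A B x :
  A \subset B -> in_coset emb g A x -> in_coset emb g B x.
Proof. by move=> sAB [u hu ->]; exists u => //; exact: gen_sub hu. Qed.

Lemma in_coset_gen g A x : gen emb A g -> in_coset emb g A x -> gen emb A x.
Proof. by move=> hg [u hu ->]; exact: gen_mul. Qed.

End Cosets.

Section Acyclic.
Variables (E : finType) (G : group) (emb : E -> G).
Implicit Types (A B : {set E}) (g h x y : G).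

Lemma acyclicW N M : acyclic emb N -> M <= N -> acyclic emb M.
Proof. by move=> acN leMN n n2 nM; apply: acN => //; exact: leq_trans leMN. Qed.

Lemma gen_setI : acyclic emb 2 -> forall A B x,
  gen emb A x -> gen emb B x -> gen emb (A :&: B) x.
Proof.
move=> ac2 A B x hA hB; apply: NNPP => hAB.
have disj y : in_coset emb x (A :&: B) y -> ~ gen emb (A :&: B) y.
  by move=> /in_coset_sym/in_coset_gen hy /hy.
apply: (ac2 2 (leqnn 2) (leqnn 2)
   (fun i : 'I_2 => nth (gone G) [:: gone G; x] i)
   (fun i : 'I_2 => nth set0 [:: A; B] i)).
split=> // -[[|[|k]] Hi] //=; rewrite /ordS /ord_pred /= /modn /=; split.
- exact/in_coset1P.
- by case=> y [[u hu ->] cy]; apply: (disj _ cy); rewrite gmul1l.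
- exact/in_coset_sym/in_coset1P.
- case=> y [cy [u hu ey]]; rewrite setIC in cy hu.
  by apply: (disj _ cy); rewrite ey gmul1l.
Qed.

Lemma gen_alpha_of : is_Egroup emb -> acyclic emb 2 ->
  forall g, gen emb (alpha_of emb g) g.
Proof.
case=> _ genT _ _ ac2 g; rewrite /alpha_of.
apply: (big_ind (fun A => gen emb A g)) => //.
- by move=> A B; apply: gen_setI.
- by move=> A /pboolP.
Qed.

Lemma alpha_of_min g A : gen emb A g -> alpha_of emb g \subset A.
Proof. by move=> hA; apply: bigcap_inf; apply/pboolP. Qed.

Lemma coset_gen_setI : acyclic emb 3 -> forall g A B1 B2 h1 h2,
  in_coset emb g A h1 -> in_coset emb g A h2 ->
  gen emb B1 h1 -> gen emb B2 h2 ->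
  exists h, gen emb (B1 :&: B2) h /\ in_coset emb g A h.
Proof.
move=> ac3 g A B1 B2 h1 h2 c1 c2 g1 g2; apply: NNPP => hn.
have disj y : gen emb (B1 :&: B2) y -> ~ in_coset emb g A y.
  by move=> hy cy; apply: hn; exists y.
have c12 : in_coset emb h1 A h2 := in_coset_trans (in_coset_sym c1) c2.
apply: (ac3 3 isT (leqnn 3)
   (fun i : 'I_3 => nth (gone G) [:: gone G; h1; h2] i)
   (fun i : 'I_3 => nth set0 [:: B1; A; B2] i)).
split=> // -[[|[|[|k]]] Hi] //=; rewrite /ordS /ord_pred /= /modn /=; split.
- exact/in_coset1P.
- case=> y [/in_coset1P hy cy]; apply: (disj y hy).
  exact: in_coset_trans c1 (in_coset_sub (subsetIr _ _) cy).
- exact: c12.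
- case=> y [cy1 cy2]; apply: (disj y).
    apply: (gen_setI (acyclicW ac3 (leqnSn 2))).
      exact: in_coset_gen g1 (in_coset_sub (subsetIr _ _) cy1).
    exact: in_coset_gen g2 (in_coset_sub (subsetIr _ _) cy2).
  exact: in_coset_trans c1 (in_coset_sub (subsetIl _ _) cy1).
- exact/in_coset_sym/in_coset1P.
- case=> y [cy /in_coset1P]; rewrite setIC => hy; apply: (disj y hy).
  exact: in_coset_trans c2 (in_coset_sub (subsetIr _ _) cy).
Qed.

End Acyclic.

Theorem mainTheorem5 (E : finType) (G : group) (emb : E -> G) :
  is_Egroup emb ->
  (acyclic emb 2 ->
     forall g : G,
       gen emb (alpha_of emb g) g /\
       (forall a' : {set E}, gen emb a' g -> alpha_of emb g \subset a')) /\
  (acyclic emb 3 ->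
     forall (alpha : {set E}) (g : G),
       (exists h, gen emb (alpha_coset emb g alpha) h /\ in_coset emb g alpha h) /\
       (forall a' : {set E},
          (exists h, gen emb a' h /\ in_coset emb g alpha h) ->
          alpha_coset emb g alpha \subset a')).
Proof.
move=> hE; split=> [ac2 g | ac3 alpha g].
  by split; [exact: gen_alpha_of | exact: alpha_of_min].
have gen_alpha := gen_alpha_of hE (acyclicW ac3 (leqnSn 2)).
split=> [|a' [h [ha' ch]]]; last first.
  apply/subsetP => e; rewrite inE => /pboolP /(_ h ch).
  exact/subsetP/alpha_of_min.
pose meets A := pbool (exists h, gen emb A h /\ in_coset emb g alpha h).
have [A /minsetP[/pboolP [h0 [gh0 ch0]] minA]] : {A | minset meets A}.
  apply: ex_minset; exists [set: E]; apply/pboolP.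
  by case: hE => _ genT _ _; exists g; split; [exact: genT | exact: in_coset_refl].
exists h0; split=> //; move: (gh0); apply: gen_sub; apply/subsetP => e eA.
rewrite inE; apply/pboolP => h ch; apply: (subsetP _ e eA).
have [h' [gh' ch']] := coset_gen_setI ac3 ch0 ch gh0 (gen_alpha h).
by apply/setIidPl/minA; [apply/pboolP; exists h' | exact: subsetIl].
Qed.
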